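(* Let $M := e_1e_2^\top + e_2e_1^\top\in\mathbb{R}^{d\times d}$. Assume $\alpha \le \frac12$, $a_0\ne0$, $|a_0|\le 1$, $w_0$ a unit vector, and $\mathrm{sign}(a_0) = \mathrm{sign}(q_0)$. Consider the updates \[ a_{t+1} = \mathrm{clip}_{[-1,1]}\big(a_t + \tfrac\alpha2 q_t\big),\quad w_{t+1} = \frac{w_t + \alpha a_t Mw_t}{\|w_t + \alpha a_t M w_t\|_2},\quad q_t := w_t^\top M w_t. \] Let $u_a := \frac{e_1 + \mathrm{sign}(a_0)e_2}{\sqrt2}$, $\gamma_t := |\langle w_t, u_a\rangle|$ and $r_t := \frac{\sqrt{1-\gamma_t^2}}{\gamma_t}$. Then: (1) for all $t\ge0$, $\mathrm{sign}(a_t) = \mathrm{sign}(q_t) = \mathrm{sign}(a_0)$, and $|a_t|$ is non-decreasing; (2) for all $t\ge0$, $r_{t+1} \le \frac{1}{1+\alpha|a_t|}r_t \le \frac{1}{1+\alpha|a_0|}r_t$. Consequently, for any $\varepsilon\in(0,1/2)$, after \[ T_2 := \left\lceil \frac{2}{\alpha|a_0|}\log\Big(\frac{1}{\gamma_0^2\varepsilon}\Big)\right\rceil \] steps we have $\gamma_{T_2}^2 \ge 1-\varepsilon$.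
   Context: $M = \mathbb{E}[yxx^\top]$ is the population moment matrix for $x$ uniform on $\{\pm1\}^d$ and $y = x_1x_2$; these are the Phase-2 (population) projected gradient updates for $f(x) = \frac12 a(w^\top x)^2$ under correlation loss. *)

From HB Require Import structures.
From mathcomp Require Import all_boot all_order all_algebra.
From mathcomp Require Import all_classical all_reals all_analysis.
Set Implicit Arguments. Unset Strict Implicit. Unset Printing Implicit Defensive.
Import Order.TTheory GRing.Theory Num.Theory.
Local Open Scope ring_scope.

Section Defs.
Variable R : realType.
Variable n : nat.
(* ambient dimension d = n.+2 (so d >= 2 and e_1, e_2 exist) *)
Notation vec := 'cV[R]_(n.+2).

Definition e1 : vec := \col_(i < n.+2) (i == 0 :> nat)%:R.
Definition e2 : vec := \col_(i < n.+2) (i == 1 :> nat)%:R.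

Definition Mx : 'M[R]_(n.+2) := e1 *m e2^T + e2 *m e1^T.

Definition dotv (u v : vec) : R := (u^T *m v) 0 0.
Definition norm2 (u : vec) : R := Num.sqrt (dotv u u).

Definition qf (w : vec) : R := dotv w (Mx *m w).

Definition clip (x : R) : R := Num.max (-1) (Num.min 1 x).

Definition ua (a0 : R) : vec := (Num.sqrt 2)^-1 *: (e1 + Num.sg a0 *: e2).

Definition gam (a0 : R) (w : vec) : R := `|dotv w (ua a0)|.

Definition rr (a0 : R) (w : vec) : R :=
  Num.sqrt (1 - gam a0 w ^+ 2) / gam a0 w.
End Defs.
Arguments e1 {R n}.
Arguments e2 {R n}.
Arguments Mx {R n}.

From HB Require Import structures.
From mathcomp Require Import all_boot all_order all_algebra.
From mathcomp Require Import all_classical all_reals all_analysis.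
From mathcomp Require Import ring lra.
Import Order.TTheory GRing.Theory Num.Theory.
Local Open Scope ring_scope.
Set Implicit Arguments. Unset Strict Implicit.

(* Only the first two coordinates x = w_1, y = w_2 interact with M: it swaps
   them and kills the others, so q = 2xy.  With s = sign a_0 and
   b = alpha |a_t|, the unnormalised update is w + s b M w.  Since u_a is an
   eigenvector of M for the eigenvalue s, the step multiplies <w, u_a> by
   1 + b, while the component of w orthogonal to u_a does not grow: along
   (e_1 - s e_2)/sqrt 2 it is multiplied by 1 - b, elsewhere it is unchanged.
   r_t is the ratio of these two lengths, so it ignores the normalisation and
   contracts by (1 + b)^-1.  The same computation keeps s q_t > 0, hence the
   clipped update pushes a_t away from 0 in direction s and |a_t| >= |a_0|.
   Thus r_T <= (1 + alpha |a_0|)^-T r_0, and T_2 steps suffice because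
   ln (1 + b) >= b / (1 + b) >= b / 2 for b <= 1. *)

Section Scalars.
Variable R : realType.
Implicit Types x d g eps b K : R.

Lemma clip_norm_le1 x : `|clip x| <= 1.
Proof.
rewrite /clip ler_norml le_max lexx /= ge_max ge_min lexx /=.
by rewrite (le_trans (lerN10 R)).
Qed.

Lemma clip_push x d : x != 0 -> `|x| <= 1 -> 0 <= Num.sg x * d ->
  Num.sg (clip (x + d)) = Num.sg x /\ `|x| <= `|clip (x + d)|.
Proof.
case: (ltrgt0P x) => [x_gt0 _ x_le1 | x_lt0 _ x_le1 |]; last by [].
- rewrite (gtr0_sg x_gt0) mul1r => d_ge0.
  have x_le : x <= clip (x + d).
    by rewrite /clip le_max le_min x_le1 lerDl d_ge0 orbT.
  by rewrite gtr0_sg ?gtr0_norm ?(lt_le_trans x_gt0 x_le).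
- rewrite (ltr0_sg x_lt0) mulN1r oppr_ge0 => d_le0.
  have le_x : clip (x + d) <= x.
    by rewrite /clip ge_max ge_min gerDl d_le0 orbT andbT; lra.
  by rewrite ltr0_sg ?ltr0_norm ?lerN2 ?(le_lt_trans le_x x_lt0).
Qed.

Lemma ratio_sqr_mul_le1 g : 0 < g ->
  (Num.sqrt (1 - g ^+ 2) / g) ^+ 2 * g ^+ 2 <= 1.
Proof.
move=> g_gt0; rewrite -exprMn divfK ?gt_eqF //.
have [g_le1 | g_gt1] := lerP 0 (1 - g ^+ 2).
  by rewrite sqr_sqrtr //; have := sqr_ge0 g; lra.
by rewrite ltr0_sqrtr // expr0n ler01.
Qed.

Lemma sqr_ge_of_ratio g eps : 0 < g -> 0 < eps ->
  (Num.sqrt (1 - g ^+ 2) / g) ^+ 2 <= eps -> 1 - eps <= g ^+ 2.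
Proof.
move=> g_gt0 eps_gt0 ratio_le.
have [g_ge1|g_lt1] := lerP (1 - g ^+ 2) 0; first lra.
have : (Num.sqrt (1 - g ^+ 2) / g) ^+ 2 * g ^+ 2 <= eps * g ^+ 2.
  by rewrite ler_wpM2r ?sqr_ge0.
rewrite -exprMn divfK ?gt_eqF // sqr_sqrtr ?(ltW g_lt1) //.
have : eps * g ^+ 2 <= eps by rewrite ler_piMr ?(ltW eps_gt0) //; lra.
lra.
Qed.

Lemma expR_div_le b : 0 <= b -> expR (b / (1 + b)) <= 1 + b.
Proof.
move=> b_ge0; have b1_gt0 : 0 < 1 + b by lra.
have := expR_ge1Dx (- (b / (1 + b))); rewrite expRN.
have -> : 1 + - (b / (1 + b)) = (1 + b)^-1 by field; rewrite gt_eqF.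
by rewrite lef_pV2 ?posrE ?expR_gt0.
Qed.

Lemma pow_ceil_log_ge b K : 0 < b -> b <= 1 -> 0 < K ->
  K <= (1 + b) ^+ `|Num.ceil (2 / b * ln K)|%N.
Proof.
move=> b_gt0 b_le1 K_gt0; set T := `|_|%N.
have T_ge : 2 / b * ln K <= T%:R.
  rewrite /T natr_absz; apply: le_trans (real_ceil_ge (num_real _)) _.
  by rewrite ler_int ler_norm.
(* This is where b <= 1, and the factor 2 in T, are used. *)
have b_half : b / 2 <= b / (1 + b).
  by rewrite ler_wpM2l ?(ltW b_gt0) // lef_pV2 ?posrE; lra.
have lnK_le : ln K <= T%:R * (b / (1 + b)).
  have -> : ln K = 2 / b * ln K * (b / 2) by field; rewrite gt_eqF.
  apply: (le_trans (ler_wpM2r _ T_ge)); first by rewrite divr_ge0 ?(ltW b_gt0).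
  by rewrite ler_wpM2l.
rewrite -[K]lnK ?posrE // (le_trans (_ : _ <= expR (b / (1 + b)) ^+ T)) //.
  by rewrite -expRM_natl ler_expR.
by rewrite lerXn2r ?nnegrE ?expR_ge0 ?expR_div_le ?(ltW b_gt0) //; lra.
Qed.

End Scalars.

Section Geometry.
Variables (R : realType) (n : nat).
Implicit Types (u v w : 'cV[R]_n.+2) (c k : R).

Lemma dotvE u v : dotv u v = \sum_i u i 0 * v i 0.
Proof. by rewrite /dotv !mxE; apply: eq_bigr => i _; rewrite mxE. Qed.

Lemma dotvC u v : dotv u v = dotv v u.
Proof. by rewrite /dotv -[v^T *m u]trmxK trmx_mul !trmxK [RHS]mxE. Qed.

Lemma dotvDr u v w : dotv u (v + w) = dotv u v + dotv u w.
Proof. by rewrite /dotv mulmxDr mxE. Qed.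

Lemma dotvZr c u v : dotv u (c *: v) = c * dotv u v.
Proof. by rewrite /dotv -scalemxAr mxE. Qed.

Lemma dotvDl u v w : dotv (v + w) u = dotv v u + dotv w u.
Proof. by rewrite dotvC dotvDr !(dotvC u). Qed.

Lemma dotvZl c u v : dotv (c *: u) v = c * dotv u v.
Proof. by rewrite dotvC dotvZr dotvC. Qed.

Lemma dotv_ge0 u : 0 <= dotv u u.
Proof. by rewrite dotvE; apply: sumr_ge0 => i _; rewrite -expr2 sqr_ge0. Qed.

Lemma dotv_e1 v : dotv e1 v = v ord0 0.
Proof.
rewrite dotvE big_ord_recl big1 ?addr0 => [|i _]; first by rewrite mxE mul1r.
by rewrite mxE mul0r.
Qed.

Lemma dotv_e2 v : dotv e2 v = v (lift ord0 ord0) 0.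
Proof.
rewrite dotvE big_ord_recl big_ord_recl big1 ?addr0 => [|i _].
  by rewrite !mxE mul0r mul1r add0r.
by rewrite mxE mul0r.
Qed.

Lemma dotv_e1e1 : @dotv R n e1 e1 = 1. Proof. by rewrite dotv_e1 mxE. Qed.
Lemma dotv_e1e2 : @dotv R n e1 e2 = 0. Proof. by rewrite dotv_e1 mxE. Qed.
Lemma dotv_e2e2 : @dotv R n e2 e2 = 1. Proof. by rewrite dotv_e2 mxE. Qed.

Lemma Mx_mulE w : Mx *m w = dotv e2 w *: e1 + dotv e1 w *: e2.
Proof.
by rewrite /Mx mulmxDl -!mulmxA [e2^T *m w]mx11_scalar [e1^T *m w]mx11_scalar
  !mul_mx_scalar.
Qed.

Lemma dotv_e1_Mx w : dotv e1 (Mx *m w) = dotv e2 w.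
Proof. by rewrite Mx_mulE dotvDr !dotvZr dotv_e1e1 dotv_e1e2; ring. Qed.

Lemma dotv_e2_Mx w : dotv e2 (Mx *m w) = dotv e1 w.
Proof.
by rewrite Mx_mulE dotvDr !dotvZr dotv_e2e2 (dotvC e2 e1) dotv_e1e2; ring.
Qed.

Lemma qfE w : qf w = 2 * (dotv e1 w * dotv e2 w).
Proof. by rewrite /qf Mx_mulE dotvDr !dotvZr !(dotvC w); ring. Qed.

Lemma qfZ k w : qf (k *: w) = k ^+ 2 * qf w.
Proof. by rewrite /qf -scalemxAr dotvZl dotvZr mulrA -expr2. Qed.

Lemma dotv_Mx w : dotv (Mx *m w) (Mx *m w) = dotv e1 w ^+ 2 + dotv e2 w ^+ 2.
Proof.
rewrite {1}Mx_mulE dotvDl !dotvZl dotv_e1_Mx dotv_e2_Mx; ring.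
Qed.

Lemma dotv_ua (a0 : R) w :
  dotv w (ua n a0) = (Num.sqrt 2)^-1 * (dotv e1 w + Num.sg a0 * dotv e2 w).
Proof. by rewrite /ua dotvZr dotvDr dotvZr !(dotvC w). Qed.

Lemma dotv_e1_step c w :
  dotv e1 (w + c *: (Mx *m w)) = dotv e1 w + c * dotv e2 w.
Proof. by rewrite dotvDr dotvZr dotv_e1_Mx. Qed.

Lemma dotv_e2_step c w :
  dotv e2 (w + c *: (Mx *m w)) = dotv e2 w + c * dotv e1 w.
Proof. by rewrite dotvDr dotvZr dotv_e2_Mx. Qed.

Lemma dotv_step c w :
  dotv (w + c *: (Mx *m w)) (w + c *: (Mx *m w))
  = dotv w w + c * (2 * qf w) + c ^+ 2 * (dotv e1 w ^+ 2 + dotv e2 w ^+ 2).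
Proof.
rewrite dotvDl !dotvDr !dotvZl !dotvZr dotv_Mx (dotvC (Mx *m w)) -/(qf w).
ring.
Qed.

Definition normalize v : 'cV[R]_n.+2 := (norm2 v)^-1 *: v.

Definition normalized_step c w := normalize (w + c *: (Mx *m w)).

(* The squared distance from v to the line spanned by ua a0 (a unit vector when
   a0 != 0). *)
Definition orth_sqr (a0 : R) v := dotv v v - dotv v (ua n a0) ^+ 2.

Lemma normalize_unit v : 0 < dotv v v -> dotv (normalize v) (normalize v) = 1.
Proof.
move=> v_gt0; rewrite /normalize dotvZl dotvZr mulrA -expr2 exprVn.
by rewrite sqr_sqrtr ?mulVf ?gt_eqF // ltW.
Qed.

Lemma rr_ge0 (a0 : R) v : 0 <= rr a0 v.
Proof. exact: divr_ge0 (sqrtr_ge0 _) (normr_ge0 _). Qed.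

Lemma rr_scale (a0 : R) k v : 0 < k -> k ^+ 2 * dotv v v = 1 ->
  rr a0 (k *: v) = Num.sqrt (orth_sqr a0 v) / `|dotv v (ua n a0)|.
Proof.
move=> k_gt0 kv1; rewrite /rr /gam dotvZl normrM (gtr0_norm k_gt0).
have -> : 1 - (k * `|dotv v (ua n a0)|) ^+ 2 = k ^+ 2 * orth_sqr a0 v.
  by rewrite /orth_sqr exprMn real_normK ?num_real // mulrBr kv1.
rewrite sqrtrM ?sqr_ge0 // sqrtr_sqr (gtr0_norm k_gt0) invfM mulrACA.
by rewrite mulfV ?gt_eqF // mul1r.
Qed.

Lemma rr_unit (a0 : R) w : dotv w w = 1 ->
  rr a0 w = Num.sqrt (orth_sqr a0 w) / `|dotv w (ua n a0)|.
Proof. by move=> w1; rewrite -(rr_scale a0 ltr01) ?scale1r // expr1n mul1r. Qed.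

Lemma rr_normalize (a0 : R) v : 0 < dotv v v ->
  rr a0 (normalize v) = Num.sqrt (orth_sqr a0 v) / `|dotv v (ua n a0)|.
Proof.
move=> v_gt0; apply: rr_scale; first by rewrite invr_gt0 sqrtr_gt0.
by rewrite exprVn sqr_sqrtr ?mulVf ?gt_eqF // ltW.
Qed.

End Geometry.

Section SignedStep.
Variables (R : realType) (n : nat) (a0 : R).
Hypothesis a0_neq0 : a0 != 0.
Local Notation s := (Num.sg a0).
Implicit Types (w : 'cV[R]_n.+2) (b x : R).

Lemma sg_pm1 : s = 1 \/ s = -1.
Proof. by move: a0_neq0; case: sgrP => _ /=; [| left | right]. Qed.

Lemma sg_mul_gt0 x : (0 < s * x) = (Num.sg x == s).
Proof.
by case: sg_pm1 => ->; rewrite ?mul1r ?mulN1r ?oppr_gt0 (sgr_cp0 x).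
Qed.

Lemma dotv_ua_step b w :
  dotv (w + (s * b) *: (Mx *m w)) (ua n a0) = (1 + b) * dotv w (ua n a0).
Proof.
rewrite !dotv_ua dotv_e1_step dotv_e2_step.
by case: sg_pm1 => ->; ring.
Qed.

Lemma orth_sqr_step b w : 0 <= b <= 2 ->
  orth_sqr a0 (w + (s * b) *: (Mx *m w)) <= orth_sqr a0 w.
Proof.
move=> /andP[b_ge0 b_le2]; set x := dotv e1 w; set y := dotv e2 w.
have sqrt2V : (Num.sqrt (2 : R))^-1 ^+ 2 = 2^-1 by rewrite exprVn sqr_sqrtr.
(* (x - s y) / sqrt 2 is the coordinate along the eigenvector
   (e1 - s e2) / sqrt 2 of M for the eigenvalue -s, which the step multiplies
   by 1 - b. *)
have -> : orth_sqr a0 (w + (s * b) *: (Mx *m w))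
    = orth_sqr a0 w - b * (2 - b) / 2 * (x - s * y) ^+ 2.
  rewrite /orth_sqr dotv_ua_step dotv_step qfE !dotv_ua !exprMn sqrt2V -/x -/y.
  by case: sg_pm1 => ->; field.
have : 0 <= b * (2 - b) / 2 * (x - s * y) ^+ 2.
  by rewrite mulr_ge0 ?sqr_ge0 // divr_ge0 // mulr_ge0 // subr_ge0.
lra.
Qed.

Lemma qf_step_gt0 b w : 0 <= b -> 0 < s * qf w ->
  0 < s * qf (w + (s * b) *: (Mx *m w)).
Proof.
move=> b_ge0 qf_gt0; set x := dotv e1 w; set y := dotv e2 w.
have -> : s * qf (w + (s * b) *: (Mx *m w))
    = (1 + b ^+ 2) * (s * qf w) + 2 * b * (x ^+ 2 + y ^+ 2).
  rewrite !qfE dotv_e1_step dotv_e2_step -/x -/y.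
  by case: sg_pm1 => ->; ring.
have : 0 < (1 + b ^+ 2) * (s * qf w) by rewrite mulr_gt0 // ltr_pwDl ?sqr_ge0.
have : 0 <= 2 * b * (x ^+ 2 + y ^+ 2).
  by rewrite mulr_ge0 ?addr_ge0 ?sqr_ge0 ?mulr_ge0.
lra.
Qed.

Lemma dotv_step_ge b w : 0 <= b -> 0 < s * qf w ->
  dotv w w <= dotv (w + (s * b) *: (Mx *m w)) (w + (s * b) *: (Mx *m w)).
Proof.
move=> b_ge0 qf_gt0; rewrite dotv_step.
have -> : s * b * (2 * qf w) = 2 * b * (s * qf w) by ring.
have : 0 <= 2 * b * (s * qf w) by rewrite mulr_ge0 ?(ltW qf_gt0) ?mulr_ge0.
have : 0 <= (s * b) ^+ 2 * (dotv e1 w ^+ 2 + dotv e2 w ^+ 2).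
  by rewrite mulr_ge0 ?addr_ge0 ?sqr_ge0.
lra.
Qed.

Lemma gam_gt0 w : 0 < s * qf w -> 0 < gam a0 w.
Proof.
move=> qf_gt0; rewrite /gam dotv_ua normr_gt0 mulf_neq0 ?invr_eq0 //.
apply: contraTneq qf_gt0 => /eqP; rewrite addr_eq0 => /eqP x_eq.
rewrite qfE x_eq.
by case: sg_pm1 => ->; rewrite -leNgt; nra.
Qed.

Section UnitSphere.
Variables (b : R) (w : 'cV[R]_n.+2).
Hypotheses (b_ge0 : 0 <= b) (w_unit : dotv w w = 1) (qf_gt0 : 0 < s * qf w).

Let step_gt0 :
  0 < dotv (w + (s * b) *: (Mx *m w)) (w + (s * b) *: (Mx *m w)).
Proof. by rewrite (lt_le_trans _ (dotv_step_ge b_ge0 qf_gt0)) ?w_unit. Qed.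

Lemma normalized_step_unit :
  dotv (normalized_step (s * b) w) (normalized_step (s * b) w) = 1.
Proof. exact: normalize_unit. Qed.

Lemma normalized_step_qf_gt0 : 0 < s * qf (normalized_step (s * b) w).
Proof.
rewrite /normalized_step /normalize qfZ mulrCA mulr_gt0 ?qf_step_gt0 //.
by rewrite exprn_gt0 // invr_gt0 sqrtr_gt0.
Qed.

Lemma rr_normalized_step : b <= 2 ->
  rr a0 (normalized_step (s * b) w) <= (1 + b)^-1 * rr a0 w.
Proof.
move=> b_le2; rewrite rr_normalize // dotv_ua_step rr_unit // normrM.
rewrite (ger0_norm (addr_ge0 ler01 b_ge0)) invfM mulrCA ler_wpM2l ?invr_ge0 //.
  by rewrite addr_ge0.
by rewrite ler_wpM2r ?invr_ge0 // ler_wsqrtr // orth_sqr_step // b_ge0 b_le2.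
Qed.

End UnitSphere.

End SignedStep.

Record phase2_dynamics (R : realType) (n : nat) (alpha : R)
    (a : nat -> R) (w : nat -> 'cV[R]_n.+2) : Prop := {
  alpha_gt0 : 0 < alpha;
  alpha_le1 : alpha <= 1;
  a0_neq0 : a 0%N != 0;
  a0_le1 : `|a 0%N| <= 1;
  w0_unit : norm2 (w 0%N) = 1;
  sg_a0 : Num.sg (a 0%N) = Num.sg (qf (w 0%N));
  a_rec : forall t, a t.+1 = clip (a t + alpha / 2 * qf (w t));
  w_rec : forall t, w t.+1 = normalized_step (alpha * a t) (w t) }.

Section Dynamics.
Variables (R : realType) (n : nat) (alpha : R).
Variables (a : nat -> R) (w : nat -> 'cV[R]_n.+2).
Hypothesis D : phase2_dynamics alpha a w.
Local Notation s := (Num.sg (a 0%N)).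
Let alpha_ge0 : 0 <= alpha := ltW (alpha_gt0 D).

Lemma step_size t : Num.sg (a t) = s -> alpha * a t = s * (alpha * `|a t|).
Proof. by move=> <-; rewrite mulrCA -numEsg. Qed.

Lemma a_step t : Num.sg (a t) = s -> `|a t| <= 1 -> 0 < s * qf (w t) ->
  Num.sg (a t.+1) = s /\ `|a t| <= `|a t.+1|.
Proof.
move=> sg_at at_le1 qf_gt0; rewrite -sg_at (a_rec D); apply: clip_push => //.
  by rewrite -sgr_eq0 sg_at sgr_eq0 (a0_neq0 D).
by rewrite sg_at mulrCA mulr_ge0 ?divr_ge0 ?(ltW qf_gt0).
Qed.

Lemma invariant t :
  [/\ dotv (w t) (w t) = 1, Num.sg (a t) = s, `|a t| <= 1 & 0 < s * qf (w t)].
Proof.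
elim: t => [|t [wt_unit sg_at at_le1 qf_gt0]].
  split; [| by [] | exact: a0_le1 D |].
    by rewrite -[LHS]sqr_sqrtr ?dotv_ge0 // -/(norm2 _) (w0_unit D) expr1n.
  by rewrite sg_mul_gt0 ?(a0_neq0 D) // (sg_a0 D).
have b_ge0 : 0 <= alpha * `|a t| by rewrite mulr_ge0.
have [sg_at1 _] := a_step sg_at at_le1 qf_gt0.
split => //.
- by rewrite (w_rec D) (step_size sg_at) normalized_step_unit ?(a0_neq0 D).
- by rewrite (a_rec D) clip_norm_le1.
- by rewrite (w_rec D) (step_size sg_at) normalized_step_qf_gt0 ?(a0_neq0 D).
Qed.

Lemma sg_a t : Num.sg (a t) = s.
Proof. by case: (invariant t). Qed.

Lemma sg_qf t : Num.sg (qf (w t)) = s.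
Proof.
by case: (invariant t) => _ _ _; rewrite sg_mul_gt0 ?(a0_neq0 D) // => /eqP.
Qed.

Lemma abs_a_le t : `|a t| <= `|a t.+1|.
Proof.
case: (invariant t) => _ sg_at at_le1 qf_gt0.
by case: (a_step sg_at at_le1 qf_gt0).
Qed.

Lemma abs_a0_le t : `|a 0%N| <= `|a t|.
Proof. by elim: t => // t IH; exact: le_trans IH (abs_a_le t). Qed.

Lemma rate_bounds t : 0 <= alpha * `|a t| <= 1.
Proof.
case: (invariant t) => _ _ at_le1 _; rewrite mulr_ge0 //=.
by rewrite -[1 in X in _ <= X]mulr1 ler_pM ?(alpha_le1 D).
Qed.

Lemma rate_le t : (1 + alpha * `|a t|)^-1 <= (1 + alpha * `|a 0%N|)^-1.
Proof.
have pos u : 0 <= alpha * `|a u| -> 1 + alpha * `|a u| \is Num.pos.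
  by rewrite posrE; lra.
rewrite lef_pV2 ?pos ?mulr_ge0 //.
by rewrite lerD2l ler_wpM2l ?abs_a0_le.
Qed.

Lemma rr_contract t :
  rr (a 0%N) (w t.+1) <= (1 + alpha * `|a t|)^-1 * rr (a 0%N) (w t).
Proof.
case: (invariant t) => wt_unit sg_at _ qf_gt0.
have /andP[b_ge0 b_le1] := rate_bounds t.
rewrite (w_rec D) (step_size sg_at).
by apply: rr_normalized_step => //; [exact: a0_neq0 D | lra].
Qed.

Lemma rr_geometric t :
  rr (a 0%N) (w t) <= (1 + alpha * `|a 0%N|)^-1 ^+ t * rr (a 0%N) (w 0%N).
Proof.
elim: t => [|t IH]; first by rewrite expr0 mul1r.
rewrite exprS -mulrA (le_trans (rr_contract t)) // ler_pM ?rr_ge0 ?rate_le //.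
by rewrite invr_ge0 addr_ge0 ?mulr_ge0.
Qed.

Lemma gam_w_gt0 t : 0 < gam (a 0%N) (w t).
Proof. by case: (invariant t) => _ _ _; apply: gam_gt0; exact: a0_neq0 D. Qed.

Lemma gam_sqr_ge eps T : 0 < eps ->
  (gam (a 0%N) (w 0%N) ^+ 2 * eps)^-1 <= (1 + alpha * `|a 0%N|) ^+ T ->
  1 - eps <= gam (a 0%N) (w T) ^+ 2.
Proof.
move=> eps_gt0 T_large; apply: (sqr_ge_of_ratio (gam_w_gt0 T) eps_gt0).
move: T_large (rr_geometric T) (ratio_sqr_mul_le1 (gam_w_gt0 0)).
rewrite -/(rr (a 0%N) (w T)) -/(rr (a 0%N) (w 0%N)).
set g0 := gam _ (w 0%N); set r0 := rr _ (w 0%N); set q := (1 + _)^-1.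
move=> T_large rrT_le r0g0_le1.
have /andP[b_ge0 _] := rate_bounds 0.
have g0_gt0 : 0 < g0 := gam_w_gt0 0.
have r0_ge0 : 0 <= r0 := rr_ge0 _ _.
have qT_ge0 : 0 <= q ^+ T by rewrite exprn_ge0 // invr_ge0; lra.
have qT_le1 : q ^+ T <= 1 by rewrite exprn_ile1 ?invr_ge0 ?invf_le1; lra.
have qT_le : q ^+ T <= g0 ^+ 2 * eps.
  have K_gt0 : 0 < g0 ^+ 2 * eps := mulr_gt0 (exprn_gt0 2 g0_gt0) eps_gt0.
  rewrite /q exprVn -[g0 ^+ 2 * eps]invrK lef_pV2 // posrE ?invr_gt0 //.
  by rewrite exprn_gt0 //; lra.
have rT_ge0 : 0 <= rr (a 0%N) (w T) := rr_ge0 _ _.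
apply: (le_trans (lerXn2r 2 rT_ge0 (mulr_ge0 qT_ge0 r0_ge0) rrT_le)).
rewrite exprMn (@le_trans _ _ (q ^+ T * r0 ^+ 2)) //.
  by rewrite ler_wpM2r ?sqr_ge0 // expr2 ler_piMr.
rewrite (le_trans (ler_wpM2r (sqr_ge0 r0) qT_le)) //.
have -> : g0 ^+ 2 * eps * r0 ^+ 2 = eps * (r0 ^+ 2 * g0 ^+ 2) by ring.
by rewrite ler_piMr ?(ltW eps_gt0).
Qed.

End Dynamics.

Unset Implicit Arguments.

Theorem lemma10 (R : realType) (n : nat) (alpha : R)
  (a : nat -> R) (w : nat -> 'cV[R]_(n.+2)) :
  0 < alpha -> alpha <= 1 / 2 ->
  a 0%N != 0 -> `|a 0%N| <= 1 ->
  norm2 (w 0%N) = 1 ->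
  Num.sg (a 0%N) = Num.sg (qf (w 0%N)) ->
  (forall t, a t.+1 = clip (a t + alpha / 2 * qf (w t))) ->
  (forall t, w t.+1 =
     (norm2 (w t + (alpha * a t) *: (Mx *m w t)))^-1
       *: (w t + (alpha * a t) *: (Mx *m w t))) ->
  (forall t, Num.sg (a t) = Num.sg (a 0%N) /\ Num.sg (qf (w t)) = Num.sg (a 0%N)
             /\ `|a t| <= `|a t.+1|) /\
  (forall t, rr (a 0%N) (w t.+1) <= (1 + alpha * `|a t|)^-1 * rr (a 0%N) (w t)
             /\ (1 + alpha * `|a t|)^-1 * rr (a 0%N) (w t)
                  <= (1 + alpha * `|a 0%N|)^-1 * rr (a 0%N) (w t)) /\
  (forall eps : R, 0 < eps -> eps < 1 / 2 ->
     let T2 := `|Num.ceil (2 / (alpha * `|a 0%N|)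
                  * ln ((gam (a 0%N) (w 0%N) ^+ 2 * eps)^-1))|%N in
     gam (a 0%N) (w T2) ^+ 2 >= 1 - eps).
Proof.
move=> alpha_gt0 alpha_le a0_neq0 a0_le1 w0_unit sg_a0 a_rec w_rec.
have D : phase2_dynamics alpha a w by split => //; lra.
have /andP[_ b_le1] := rate_bounds D 0.
split; [|split].
- by move=> t; rewrite (sg_a D) (sg_qf D) (abs_a_le D).
- move=> t; split; first exact: rr_contract.
  by rewrite ler_wpM2r ?rr_ge0 ?(rate_le D).
move=> eps eps_gt0 _; apply: (gam_sqr_ge D eps_gt0).
apply: pow_ceil_log_ge => //; first by rewrite mulr_gt0 ?normr_gt0.
by rewrite invr_gt0 mulr_gt0 // exprn_gt0 // (gam_w_gt0 D).
Qed.
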